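(* Let $G$ and $H$ be finitely generated groups such that $H$ has property $\mathrm{F}_{\mathrm{Cone}}(G)$. Then there are only finitely many conjugacy classes of homomorphisms $H\to G$ (where $\varphi_1,\varphi_2$ are conjugate if there is $g\in G$ with $\varphi_2(h)=g\varphi_1(h)g^{-1}$ for all $h\in H$).
   Context: Fix a word metric $d_S$ on $G$ with respect to a finite generating set $S$. For a non-principal ultrafilter $\omega$ on $\mathbb{N}$, a sequence $\lambda_n\to\infty$ of positive reals and basepoints $\bullet_n\in G$, the asymptotic cone $\mathrm{Cone}_\omega(G,d_S,(\lambda_n),(\bullet_n))$ is the set of sequences $(x_n)$ in $G$ with $\sup_n\frac1{\lambda_n}d_S(x_n,\bullet_n)<\infty$, modulo $\lim_\omega\frac1{\lambda_n}d_S(x_n,y_n)=0$, with metric $\lim_\omega\frac1{\lambda_n}d_S(x_n,y_n)$. Given such a cone and homomorphisms $\varphi_n\colon H\to G$ such that $\sup_n\frac1{\lambda_n}d_S(\varphi_n(h)\bullet_n,\bullet_n)<\infty$ for every $h\in H$, $H$ acts isometrically on the cone by $h\cdot[x_n]=[\varphi_n(h)x_n]$. The group $H$ has property $\mathrm{F}_{\mathrm{Cone}}(G)$ if for every asymptotic cone of $G$ and every such sequence of homomorphisms, the induced action has a fixed point. *)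

From Stdlib Require Export Reals List.
Open Scope R_scope.
Set Implicit Arguments.

(** Groups (left-unit and left-inverse axioms suffice). *)
Record Group := {
  gcar :> Type;
  gmul : gcar -> gcar -> gcar;
  gone : gcar;
  ginv : gcar -> gcar;
  gassoc : forall x y z, gmul x (gmul y z) = gmul (gmul x y) z;
  gmul1l : forall x, gmul gone x = x;
  gmulVl : forall x, gmul (ginv x) x = gone }.

Arguments gmul {g}. Arguments gone {g}. Arguments ginv {g}.

Definition is_hom {H G : Group} (f : H -> G) : Prop :=
  forall a b : H, f (gmul a b) = gmul (f a) (f b).

Definition is_letter {G : Group} (S : list G) (x : G) : Prop :=
  In x S \/ In (ginv x) S.
Definition word_prod {G : Group} (w : list G) : G := fold_right gmul gone w.
Definition represents {G : Group} (S : list G) (w : list G) (g : G) : Prop :=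
  Forall (is_letter S) w /\ word_prod w = g.

Definition generates {G : Group} (S : list G) : Prop :=
  forall g : G, exists w, represents S w g.
Definition fin_gen (G : Group) : Prop := exists S : list G, generates S.

(** [dist_le S x y r] :  d_S(x,y) <= r  for the word metric d_S(x,y) = |x^{-1} y|_S. *)
Definition dist_le {G : Group} (S : list G) (x y : G) (r : R) : Prop :=
  exists w, represents S w (gmul (ginv x) y) /\ INR (length w) <= r.

Definition ultrafilter (U : (nat -> Prop) -> Prop) : Prop :=
  U (fun _ => True) /\ ~ U (fun _ => False) /\
  (forall A B, U A -> U B -> U (fun n => A n /\ B n)) /\
  (forall A B : nat -> Prop, (forall n, A n -> B n) -> U A -> U B) /\
  (forall A, U A \/ U (fun n => ~ A n)).
Definition nonprincipal (U : (nat -> Prop) -> Prop) : Prop :=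
  forall m : nat, ~ U (fun n => n = m).

Definition scaling (lam : nat -> R) : Prop :=
  (forall n, 0 < lam n) /\
  (forall M, exists N, forall n, (N <= n)%nat -> M <= lam n).

(** sup_n d_S(x_n, b_n)/lam_n < oo : (x_n) defines a point of the cone. *)
Definition in_cone_seq {G : Group} (S : list G) (lam : nat -> R) (b x : nat -> G) : Prop :=
  exists C : R, forall n, dist_le S (x n) (b n) (C * lam n).

(** lim_omega d_S(x_n, y_n)/lam_n = 0 : [x] = [y] in the cone. *)
Definition ulim_dist_zero {G : Group} (S : list G) (U : (nat -> Prop) -> Prop)
  (lam : nat -> R) (x y : nat -> G) : Prop :=
  forall eps, 0 < eps -> U (fun n => dist_le S (x n) (y n) (eps * lam n)).

(** Property F_Cone(G) of H, w.r.t. the word metric d_S on G: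
    every induced isometric action on every asymptotic cone has a fixed point. *)
Definition FCone {G : Group} (S : list G) (H : Group) : Prop :=
  forall (U : (nat -> Prop) -> Prop) (lam : nat -> R) (b : nat -> G)
         (phi : nat -> H -> G),
    ultrafilter U -> nonprincipal U -> scaling lam ->
    (forall n, is_hom (phi n)) ->
    (forall h : H, in_cone_seq S lam b (fun n => gmul (phi n h) (b n))) ->
    exists x : nat -> G, in_cone_seq S lam b x /\
      forall h : H, ulim_dist_zero S U lam (fun n => gmul (phi n h) (x n)) x.

Definition hom_conj {H G : Group} (phi1 phi2 : H -> G) : Prop :=
  exists g : G, forall h : H, phi2 h = gmul g (gmul (phi1 h) (ginv g)).

From Stdlib Require Import Lra Lia.
From mathcomp Require Import ssreflect ssrfun ssrbool eqtype ssrnat seq.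
From mathcomp Require Import boolp classical_sets filter.
From mathcomp Require Import zify.

(* Suppose there are infinitely many conjugacy classes of homomorphisms H -> G.
   For every k some homomorphism has no conjugate sending all generators of H
   into the k-ball, since there are only finitely many homomorphisms sending
   the generators into a fixed finite ball.  Conjugate each such phi_k so that
   the largest generator length m_k is minimal in its class; then m_k > k.
   With scaling factors m_k and basepoint 1, the phi_k act on an asymptotic
   cone of G with bounded orbits, and F_Cone gives a fixed point [x_k].  For
   omega-almost every k, x_k is moved by less than m_k/2 by each generator, so
   conjugating phi_k by x_k shortens all generators below m_k: contradiction. *)

Arguments gassoc {g}. Arguments gmul1l {g}. Arguments gmulVl {g}.

Section GroupLemmas.
Context {G : Group}.
Implicit Types x y : G.

Lemma idem1 y : gmul y y = y -> y = gone.
Proof. by move=> yy; rewrite -(gmul1l y) -{1}(gmulVl y) -gassoc yy gmulVl. Qed.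

Lemma mulgV x : gmul x (ginv x) = gone.
Proof.
by apply: idem1; rewrite gassoc -(gassoc x (ginv x) x) gmulVl -gassoc gmul1l.
Qed.

Lemma mulg1 x : gmul x gone = x.
Proof. by rewrite -(gmulVl x) gassoc mulgV gmul1l. Qed.

Lemma inv_uniq_r x y : gmul x y = gone -> y = ginv x.
Proof. by move=> h; rewrite -(gmul1l y) -(gmulVl x) -gassoc h mulg1. Qed.

Lemma inv_uniq_l x y : gmul x y = gone -> x = ginv y.
Proof. by move=> h; rewrite -(mulg1 x) -(mulgV y) gassoc h gmul1l. Qed.

Lemma invgK x : ginv (ginv x) = x.
Proof. by symmetry; apply: inv_uniq_r; exact: gmulVl. Qed.

Lemma invgM x y : ginv (gmul x y) = gmul (ginv y) (ginv x).
Proof.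
by symmetry; apply: inv_uniq_r; rewrite -gassoc (gassoc y) mulgV gmul1l mulgV.
Qed.

Lemma invg1 : ginv (@gone G) = gone.
Proof. by rewrite -{2}(gmulVl gone) mulg1. Qed.

Lemma word_prod_cat (w1 w2 : list G) :
  word_prod (w1 ++ w2) = gmul (word_prod w1) (word_prod w2).
Proof. by elim: w1 => [|a w IH] /=; rewrite ?gmul1l // IH gassoc. Qed.

End GroupLemmas.

Section Homomorphisms.
Context {H G : Group}.
Implicit Type f : H -> G.

Lemma hom1 f : is_hom f -> f gone = gone.
Proof. by move=> hf; apply: idem1; rewrite -hf gmul1l. Qed.

Lemma homV f x : is_hom f -> f (ginv x) = ginv (f x).
Proof. by move=> hf; apply: inv_uniq_l; rewrite -hf gmulVl hom1. Qed.

Lemma hom_const1 : is_hom (fun _ : H => (@gone G)).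
Proof. by move=> a b; rewrite gmul1l. Qed.

Lemma hom_eq_gen (T : list H) f g : generates T -> is_hom f -> is_hom g ->
  (forall t, In t T -> f t = g t) -> forall h, f h = g h.
Proof.
move=> hT hf hg e h; have [w [hw <-]] := hT h.
elim: hw => [|x w0 hx _ IH] /=; first by rewrite !hom1.
rewrite hf hg IH; congr gmul.
case: hx => hx; first exact: e.
by rewrite -(invgK x) (homV _ _ hf) (homV _ _ hg) e.
Qed.

Lemma finite_homs_on (T : list H) (B : list G) : exists L : list (H -> G),
  (forall f, In f L -> is_hom f) /\
  forall phi, is_hom phi -> (forall t, In t T -> In (phi t) B) ->
    exists f, In f L /\ forall t, In t T -> f t = phi t.
Proof.
elim: T => [|a T [L [hL hP]]].
  exists [:: fun _ => gone]; split; first by move=> f [<-|[]]; exact: hom_const1.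
  by move=> phi _ _; exists (fun _ => gone); split; [left|].
pose extends f b g := is_hom g /\ (forall t, In t T -> g t = f t) /\ g a = b.
pose spec f b g := (is_hom f -> is_hom g) /\
  ((exists g', extends f b g') -> extends f b g).
have hspec f b : exists g, spec f b g.
  case: (pselect (exists g, extends f b g)) => [[g hg]|hn].
    by exists g; split => // _; case: hg.
  by exists f; split => // /hn.
have [pick hpick] : {pick : (H -> G) -> G -> H -> G & forall f b, spec f b (pick f b)}.
  by apply: (choice (P := fun f p => forall b, spec f b (p b))) => f;
     have [p hp] := choice (hspec f); exists p.
exists (flat_map (fun f => List.map (pick f) B) L); split.
  move=> g /in_flat_map [f [fL /in_map_iff [b [<- _]]]].
  exact: (hpick f b).1 (hL f fL).
move=> phi hphi hB.
have [f [fL hf]] := hP phi hphi (fun t ht => hB t (or_intror ht)).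
have ext : extends f (phi a) phi by split=> //; split=> // t ht; rewrite hf.
have [_ [hTf hTa]] := (hpick f (phi a)).2 (ex_intro _ _ ext).
exists (pick f (phi a)); split.
  by apply/in_flat_map; exists f; split => //; apply/in_map; apply: hB; left.
by move=> t [<-|ht]; [exact: hTa | rewrite hTf // hf].
Qed.

End Homomorphisms.

Section WordLength.
Context {G : Group} (S : list G).

Definition wlen_le (g : G) (k : nat) : Prop :=
  exists w, represents S w g /\ (length w <= k)%N.

Lemma wlen_le_trans g k k' : wlen_le g k -> (k <= k')%N -> wlen_le g k'.
Proof. by move=> [w [hw hl]] hk; exists w; split => //; lia. Qed.

Lemma wlen_le1 : wlen_le gone 0.
Proof. by exists nil. Qed.

Lemma wlen_leM a b k1 k2 : wlen_le a k1 -> wlen_le b k2 -> wlen_le (gmul a b) (k1 + k2).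
Proof.
move=> [w1 [[f1 p1] l1]] [w2 [[f2 p2] l2]]; exists (w1 ++ w2); split.
  by split; [apply/Forall_app | rewrite word_prod_cat p1 p2].
by rewrite length_app; lia.
Qed.

Lemma wlen_leV a k : wlen_le a k -> wlen_le (ginv a) k.
Proof.
move=> [w [[f p] l]]; exists (List.rev (List.map ginv w)); split; last first.
  by rewrite length_rev length_map.
split.
  apply/Forall_rev/Forall_map; apply: Forall_impl f => x.
  by rewrite /is_letter invgK; tauto.
rewrite -p {f p l}; elim: w => [|x w IH] /=; first by rewrite invg1.
by rewrite word_prod_cat IH /= mulg1 invgM.
Qed.

Lemma dist_le_wlen x y r :
  dist_le S x y r <-> exists k, wlen_le (gmul (ginv x) y) k /\ INR k <= r.
Proof.
split=> [[w [hw hl]]|[k [[w [hw hl]] hk]]]; first by exists (length w); split => //; exists w.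
by exists w; split => //; apply: Rle_trans hk; apply/le_INR/leP.
Qed.

Hypothesis genS : generates S.

Lemma wlen_le_list (B : list G) : exists m, forall b, In b B -> wlen_le b m.
Proof.
elim: B => [|a B [m IH]]; first by exists 0%N.
have [w hw] := genS a; exists (length w + m)%N => b [<-|hb].
  by exists w; split => //; lia.
by apply: wlen_le_trans (IH _ hb) _; lia.
Qed.

End WordLength.

Fixpoint words_le {T : Type} (A : list T) (n : nat) : list (list T) :=
  if n is n'.+1 then nil :: flat_map (fun a => map (cons a) (words_le A n')) A
  else [:: nil].

Lemma words_leP {T : Type} (A : list T) n w :
  Forall (fun x => In x A) w -> (length w <= n)%N -> In w (words_le A n).
Proof.
elim: n w => [|n IH] [|a w] //=; [by left | by left |].
move=> hf hl; right; apply/in_flat_map; inversion hf; subst.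
by exists a; split => //; apply/in_map; apply: IH.
Qed.

Lemma ball_finite {G : Group} (S : list G) k :
  exists B, forall g, wlen_le S g k -> In g B.
Proof.
exists (List.map word_prod (words_le (S ++ map ginv S) k)) => g [w [[f <-] l]].
apply/in_map/words_leP => //; apply: Forall_impl f => x [h|h]; apply/in_or_app.
  by left.
by right; rewrite -(invgK x); apply/in_map.
Qed.

Lemma wlen_le_hom_word {H G : Group} (S : list G) (T : list H) (phi : H -> G) m w :
  is_hom phi -> (forall t, In t T -> wlen_le S (phi t) m) -> Forall (is_letter T) w ->
  wlen_le S (phi (word_prod w)) (length w * m).
Proof.
move=> hphi hm; elim=> [|x w0 hx _ IH] /=; first by rewrite hom1 //; exact: wlen_le1.
rewrite hphi mulSn; apply: wlen_leM IH.
case: hx => hx; first exact: hm.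
by rewrite -(invgK x) homV //; apply/wlen_leV/hm.
Qed.

Section Conjugation.
Context {H G : Group} (S : list G) (T : list H).
Implicit Types (phi : H -> G) (g x : G).

Definition conjf phi g : H -> G := fun h => gmul (ginv g) (gmul (phi h) g).

Lemma conjf_hom phi g : is_hom phi -> is_hom (conjf phi g).
Proof.
by move=> hphi a b; rewrite /conjf hphi !gassoc -(gassoc _ g) mulgV mulg1 ?gassoc.
Qed.

Lemma conjfM phi g x h : conjf (conjf phi g) x h = conjf phi (gmul g x) h.
Proof. by rewrite /conjf invgM !gassoc. Qed.

Lemma hom_conj_conjf phi g : hom_conj (conjf phi g) phi.
Proof.
by exists g => h; rewrite /conjf !gassoc mulgV gmul1l -gassoc mulgV mulg1.
Qed.

Definition conj_short phi k : Prop :=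
  exists g, forall t, In t T -> wlen_le S (conjf phi g t) k.

Lemma conj_short_conjf phi g k : conj_short (conjf phi g) k -> conj_short phi k.
Proof. by move=> [x hx]; exists (gmul g x) => t ht; rewrite -conjfM; apply: hx. Qed.

Lemma finite_classes_of_conj_short k : generates T ->
  (forall phi, is_hom phi -> conj_short phi k) ->
  exists L : list (H -> G), (forall f, In f L -> is_hom f) /\
    forall phi, is_hom phi -> exists f, In f L /\ hom_conj f phi.
Proof.
move=> genT short; have [B hB] := ball_finite S k.
have [L [homL hL]] := finite_homs_on T B.
exists L; split => // phi hphi.
have [g hg] := short phi hphi.
have hom_psi := conjf_hom phi g hphi.
have [f [fL hf]] := hL _ hom_psi (fun t ht => hB _ (hg t ht)).
exists f; split => //; have [x hx] := hom_conj_conjf phi g.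
by exists x => h; rewrite hx (hom_eq_gen _ _ _ genT (homL f fL) hom_psi hf).
Qed.

Hypothesis genS : generates S.

Lemma minimal_conjugate phi : exists g m,
  (forall t, In t T -> wlen_le S (conjf phi g t) m) /\
  forall m', conj_short phi m' -> (m <= m')%N.
Proof.
have [m0 hm0] := wlen_le_list S genS (List.map (conjf phi gone) T).
have ex : exists m, `[< conj_short phi m >].
  by exists m0; apply/asboolP; exists gone => t ht; apply/hm0/in_map.
case: (ex_minnP ex) => m /asboolP [g hg] hmin.
by exists g, m; split => // m' /asboolP; apply: hmin.
Qed.

End Conjugation.

Lemma unbounded_minimal_conjugates {H G : Group} {S : list G} {T : list H} :
  generates S -> generates T ->
  ~ (exists L : list (H -> G), (forall f, In f L -> is_hom f) /\
       forall phi, is_hom phi -> exists f, In f L /\ hom_conj f phi) ->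
  exists (psi : nat -> H -> G) (m : nat -> nat),
    (forall n, is_hom (psi n)) /\ (forall n, n < m n)%N /\
    (forall n t, In t T -> wlen_le S (psi n t) (m n)) /\
    forall n k, conj_short S T (psi n) k -> (m n <= k)%N.
Proof.
move=> genS genT infinite.
have hex n : exists p : (H -> G) * nat, is_hom p.1 /\ (n < p.2)%N /\
    (forall t, In t T -> wlen_le S (p.1 t) p.2) /\
    forall k, conj_short S T p.1 k -> (p.2 <= k)%N.
  have [phi [hphi long]] : exists phi, is_hom phi /\ ~ conj_short S T phi n.
    apply: contrapT => hn; apply: infinite; apply: (finite_classes_of_conj_short S T n genT).
    by move=> phi hphi; apply: contrapT => long; apply: hn; exists phi.
  have [g [m [hg hmin]]] := minimal_conjugate S T genS phi.
  exists (conjf phi g, m); split; first exact: conjf_hom.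
  split; last by split=> // k /conj_short_conjf; apply: hmin.
  rewrite /= ltnNge; apply/negP => hmn; apply: long.
  by exists g => t ht; apply: wlen_le_trans (hg t ht) hmn.
have [p hp] := choice hex.
exists (fun n => (p n).1), (fun n => (p n).2).
by split; [|split; [|split]] => n; have [? [? [? ?]]] := hp n.
Qed.

Lemma exists_nonprincipal_ultrafilter : exists U, ultrafilter U /\ nonprincipal U.
Proof.
have [U [ultraU eventually_sub]] := ultraFilterLemma (@eventually_filter).
have PF : ProperFilter U := ultra_proper.
have US (A B : nat -> Prop) : (forall n, A n -> B n) -> U A -> U B.
  by move=> AB; apply: filterS => n; apply: AB.
exists U; do ![split].
- exact: filterT.
- by move=> U0; apply: (filter_not_empty U); apply: US U0 => n [].
- by move=> A B UA UB; exact: filterI.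
- exact: US.
- by move=> A; case: (in_ultra_setVsetC A ultraU) => h; [left | right; apply: US h].
- move=> m Um; have Ugt : U (fun n => (m < n)%N) by apply: eventually_sub; exists m.+1.
  apply: (filter_not_empty U); apply: US (filterI Um Ugt) => n [-> ].
  by rewrite ltnn.
Qed.

Lemma ultrafilter_forall_in (U : (nat -> Prop) -> Prop) (X : Type)
    (A : X -> nat -> Prop) (T : list X) :
  ultrafilter U -> (forall t, In t T -> U (A t)) ->
  U (fun n => forall t, In t T -> A t n).
Proof.
move=> [UT [_ [UI [US _]]]]; elim: T => [|a T IH] hA.
  by apply: US UT => n _ t [].
apply: US (UI _ _ (hA a (or_introl erefl)) (IH (fun t ht => hA t (or_intror ht)))).
by move=> n [h1 h2] t [<-|ht] //; exact: h2.
Qed.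

Lemma scaling_INR {m : nat -> nat} : (forall n, n < m n)%N -> scaling (fun n => INR (m n)).
Proof.
move=> hm; split=> [n | M]; first by apply: lt_0_INR; have := hm n; lia.
have [N hN] := INR_unbounded M; exists N => n hn.
by apply/Rlt_le/(Rlt_le_trans _ _ _ hN)/le_INR; have := hm n; lia.
Qed.

Lemma hom_orbits_in_cone {H G : Group} {S : list G} {T : list H}
    {psi : nat -> H -> G} {m : nat -> nat} :
  generates T -> (forall n, is_hom (psi n)) ->
  (forall n t, In t T -> wlen_le S (psi n t) (m n)) ->
  forall h, in_cone_seq S (fun n => INR (m n)) (fun _ => gone)
              (fun n => gmul (psi n h) gone).
Proof.
move=> genT hpsi hm h; have [w [hw <-]] := genT h.
exists (INR (length w)) => n; apply/dist_le_wlen.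
exists (length w * m n)%N; split; last by rewrite mult_INR; apply: Rle_refl.
by rewrite !mulg1; apply: wlen_leV; apply: wlen_le_hom_word (hpsi n) (hm n) hw.
Qed.

Lemma small_displacement_conj_short {H G : Group} {S : list G} {T : list H}
    {phi : H -> G} {x : G} {r : R} {m : nat} :
  (forall t, In t T -> dist_le S (gmul (phi t) x) x r) -> r < INR m ->
  conj_short S T phi m.-1.
Proof.
move=> hx hr; exists x => t ht.
have [k [hk hkr]] := (dist_le_wlen _ _ _ _).1 (hx t ht).
have /INR_lt km : INR k < INR m by lra.
have hk' : wlen_le S (conjf phi x t) k.
  by rewrite -(invgK (conjf _ _ _)); apply: wlen_leV; rewrite /conjf invgM invgK.
by apply: wlen_le_trans hk' _; lia.
Qed.

Theorem proposition5p4 (G H : Group) (S : list G) :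
  generates S -> fin_gen H -> FCone S H ->
  exists L : list (H -> G),
    (forall f, In f L -> is_hom f) /\
    forall phi : H -> G, is_hom phi -> exists f, In f L /\ hom_conj f phi.
Proof.
move=> genS [T genT] fcone; apply: contrapT => infinite.
have [psi [m [hpsi [mgt [hm mmin]]]]] :=
  unbounded_minimal_conjugates genS genT infinite.
have [U [ultraU nonprincU]] := exists_nonprincipal_ultrafilter.
have [x [_ fixed]] := fcone U _ _ psi ultraU nonprincU (scaling_INR mgt) hpsi
  (hom_orbits_in_cone genT hpsi hm).
have Usmall : U (fun n => forall t, In t T ->
    dist_le S (gmul (psi n t) (x n)) (x n) (/2 * INR (m n))).
  by apply: ultrafilter_forall_in => // t _; apply: fixed; lra.
have [_ [notU0 [_ [US _]]]] := ultraU.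
apply: notU0; apply: US Usmall => n small.
have m_pos : 0 < INR (m n) := (scaling_INR mgt).1 n.
have shorter : /2 * INR (m n) < INR (m n) by lra.
have := mmin n _ (small_displacement_conj_short small shorter).
by have := mgt n; lia.
Qed.
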